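(* Let $\mathbf I=\langle I,\vee\rangle$ be a join-semilattice with order $\preceq$ (strict part $\prec$), let $\{\langle A_p,\le_p\rangle: p\in I\}$ be pairwise disjoint posets, and for $p\preceq q$ let $\psi_{pq},\varphi_{pq}:A_p\to A_q$ be monotone maps with $\varphi_{pp}=\psi_{pp}=\mathrm{id}_{A_p}$, $\varphi_{qr}\circ\varphi_{pq}=\varphi_{pr}$ and $\psi_{qr}\circ\psi_{pq}=\psi_{pr}$ for $p\preceq q\preceq r$. On $A:=\biguplus_pA_p$ define $a\le b$ (for $a\in A_p$, $b\in A_q$) iff $\varphi_{ps}(a)\le_s\psi_{qs}(b)$ where $s:=p\vee q$. Then $\le$ is a partial order on $A$ with $\le\cap A_p^2=\le_p$ for every $p\in I$ if and only if the following two conditions hold: (S1) whenever $p\prec q$, $p\prec r$ and $t:=q\vee r$, we have $\varphi_{qt}(\psi_{pq}(a))\le_t\psi_{rt}(\varphi_{pr}(a))$ for all $a\in A_p$; (S2) whenever $p\prec q$, $a,b\in A_p$ and $\varphi_{pq}(a)\le_q\psi_{pq}(b)$, then $a<_pb$. *)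

Definition is_join_semilattice {I : Type} (join : I -> I -> I) : Prop :=
  (forall p q r, join p (join q r) = join (join p q) r) /\
  (forall p q, join p q = join q p) /\
  (forall p, join p p = p).

Definition jle {I : Type} (join : I -> I -> I) (p q : I) : Prop := join p q = q.
Definition jlt {I : Type} (join : I -> I -> I) (p q : I) : Prop :=
  jle join p q /\ p <> q.

Definition is_partial_order {T : Type} (R : T -> T -> Prop) : Prop :=
  (forall x, R x x) /\
  (forall x y z, R x y -> R y z -> R x z) /\
  (forall x y, R x y -> R y x -> x = y).

Definition strict {T : Type} (R : T -> T -> Prop) (x y : T) : Prop :=
  R x y /\ x <> y.

Definition monotone {T U : Type} (R : T -> T -> Prop) (S : U -> U -> Prop)
  (f : T -> U) : Prop := forall x y, R x y -> S (f x) (f y).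

Definition sum_le {I : Type} (join : I -> I -> I) (A : I -> Type)
  (le : forall p, A p -> A p -> Prop)
  (phi psi : forall p q : I, A p -> A q)
  (x y : {p : I & A p}) : Prop :=
  le (join (projT1 x) (projT1 y))
     (phi (projT1 x) (join (projT1 x) (projT1 y)) (projT2 x))
     (psi (projT1 y) (join (projT1 x) (projT1 y)) (projT2 y)).

From Stdlib Require Import Classical.

(* Necessity: transitivity applied to psi_pq(a) <= a <= phi_pr(a) is exactly
   (S1), and applied to a <= psi_pq(b) <= b it gives (S2), antisymmetry ruling
   out a = b.  Sufficiency: for a <= b <= c push both inequalities up to
   t = (p v q) v (q v r), where (S1) at q bridges the middle term, then use
   (S2) to reflect phi_wt(a) <= psi_wt(c) back down to w = p v r.  For
   antisymmetry, (S1) with q = r gives psi <= phi, so a <= b <= a yields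
   phi_ps(a) <= psi_ps(a) at s = p v q, which (S2) allows only for s = p;
   symmetrically s = q. *)

Section JoinSemilattice.

Context {I : Type} {join : I -> I -> I} (HI : is_join_semilattice join).

Lemma jle_refl p : jle join p p.
Proof. destruct HI as [_ [_ Hidem]]. apply Hidem. Qed.

Lemma jle_joinl p q : jle join p (join p q).
Proof.
  destruct HI as [Hassoc [_ Hidem]]. unfold jle.
  now rewrite Hassoc, Hidem.
Qed.

Lemma jle_joinr p q : jle join q (join p q).
Proof. destruct HI as [_ [Hcomm _]]. rewrite Hcomm. apply jle_joinl. Qed.

Lemma jle_trans {p q r} : jle join p q -> jle join q r -> jle join p r.
Proof.
  destruct HI as [Hassoc _]. unfold jle. intros Hpq Hqr.
  now rewrite <- Hqr, Hassoc, Hpq.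
Qed.

Lemma jle_join_lub {p q r} :
  jle join p r -> jle join q r -> jle join (join p q) r.
Proof.
  destruct HI as [Hassoc _]. unfold jle. intros Hpr Hqr.
  now rewrite <- Hassoc, Hqr, Hpr.
Qed.

End JoinSemilattice.

Section GluedOrder.

Variables (I : Type) (join : I -> I -> I).
Hypothesis HI : is_join_semilattice join.
Variables (A : I -> Type) (le : forall p, A p -> A p -> Prop).
Hypothesis Hle : forall p, is_partial_order (le p).
Variables (phi psi : forall p q : I, A p -> A q).
Hypothesis Hphi_mono : forall p q, jle join p q -> monotone (le p) (le q) (phi p q).
Hypothesis Hpsi_mono : forall p q, jle join p q -> monotone (le p) (le q) (psi p q).
Hypothesis Hphi_id : forall p (a : A p), phi p p a = a.
Hypothesis Hpsi_id : forall p (a : A p), psi p p a = a.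
Hypothesis Hphi_comp : forall p q r, jle join p q -> jle join q r ->
  forall a : A p, phi q r (phi p q a) = phi p r a.
Hypothesis Hpsi_comp : forall p q r, jle join p q -> jle join q r ->
  forall a : A p, psi q r (psi p q a) = psi p r a.

Local Notation R := (sum_le join A le phi psi).

Definition cond_S1 : Prop :=
  forall p q r, jlt join p q -> jlt join p r ->
    forall a : A p,
      le (join q r) (phi q (join q r) (psi p q a)) (psi r (join q r) (phi p r a)).

Definition cond_S2 : Prop :=
  forall p q, jlt join p q ->
    forall a b : A p, le q (phi p q a) (psi p q b) -> strict (le p) a b.

Lemma le_refl_at p (a : A p) : le p a a.
Proof. apply (Hle p). Qed.

Lemma le_trans_at {p} (a b c : A p) : le p a b -> le p b c -> le p a c.
Proof. apply (Hle p). Qed.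

Lemma sum_leE {p q s} (a : A p) (b : A q) :
  join p q = s -> R (existT _ p a) (existT _ q b) <-> le s (phi p s a) (psi q s b).
Proof. intros <-. reflexivity. Qed.

Lemma sum_le_fiber p (a b : A p) : R (existT _ p a) (existT _ p b) <-> le p a b.
Proof. rewrite (sum_leE a b (jle_refl HI p)), Hphi_id, Hpsi_id. reflexivity. Qed.

Lemma sum_le_refl x : R x x.
Proof. destruct x as [p a]. apply sum_le_fiber, le_refl_at. Qed.

Lemma sum_le_psi_l {p q} (a : A p) :
  jle join p q -> R (existT _ q (psi p q a)) (existT _ p a).
Proof.
  destruct HI as [_ [Hcomm _]]. intros Hpq.
  apply (sum_leE (s := q)); [now rewrite Hcomm|]. rewrite Hphi_id. apply le_refl_at.
Qed.

Lemma sum_le_phi_r {p r} (a : A p) :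
  jle join p r -> R (existT _ p a) (existT _ r (phi p r a)).
Proof. intros Hpr. apply (sum_leE _ _ Hpr). rewrite Hpsi_id. apply le_refl_at. Qed.

Lemma sum_le_push_phi {p q t} {a : A p} {b : A q} :
  jle join (join p q) t -> R (existT _ p a) (existT _ q b) ->
  le t (phi p t a) (phi (join p q) t (psi q (join p q) b)).
Proof.
  intros Hst H. rewrite <- (Hphi_comp _ _ _ (jle_joinl HI p q) Hst).
  exact (Hphi_mono _ _ Hst _ _ H).
Qed.

Lemma sum_le_push_psi {p q t} {a : A p} {b : A q} :
  jle join (join p q) t -> R (existT _ p a) (existT _ q b) ->
  le t (psi (join p q) t (phi p (join p q) a)) (psi q t b).
Proof.
  intros Hst H. rewrite <- (Hpsi_comp _ _ _ (jle_joinr HI p q) Hst).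
  exact (Hpsi_mono _ _ Hst _ _ H).
Qed.

Lemma cond_S1_of_sum_le_trans :
  (forall x y z, R x y -> R y z -> R x z) -> cond_S1.
Proof.
  intros Htrans p q r [Hpq _] [Hpr _] a.
  exact (Htrans _ _ _ (sum_le_psi_l a Hpq) (sum_le_phi_r a Hpr)).
Qed.

Lemma cond_S2_of_sum_le_partial_order :
  (forall x y z, R x y -> R y z -> R x z) ->
  (forall x y, R x y -> R y x -> x = y) -> cond_S2.
Proof.
  intros Htrans Hanti p q [Hpq Hne] a b H.
  assert (Hab : R (existT _ p a) (existT _ q (psi p q b))).
  { apply (sum_leE _ _ Hpq). now rewrite Hpsi_id. }
  split.
  - apply sum_le_fiber, (Htrans _ _ _ Hab), sum_le_psi_l, Hpq.
  - intros <-. apply Hne.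
    exact (f_equal (@projT1 _ _) (Hanti _ _ Hab (sum_le_psi_l a Hpq))).
Qed.

Lemma cond_S2_reflect {p t} (a b : A p) : cond_S2 ->
  jle join p t -> le t (phi p t a) (psi p t b) -> le p a b.
Proof.
  intros HS2 Hpt H. destruct (classic (p = t)) as [<- | Hne].
  - now rewrite Hphi_id, Hpsi_id in H.
  - apply (HS2 p t (conj Hpt Hne) a b H).
Qed.

Lemma cond_S2_phi_le_psi_eq {p t} (a : A p) : cond_S2 ->
  jle join p t -> le t (phi p t a) (psi p t a) -> p = t.
Proof.
  intros HS2 Hpt H. apply NNPP. intros Hne.
  now destruct (HS2 p t (conj Hpt Hne) a a H).
Qed.

Lemma cond_S1_weak {p q r} (a : A p) : cond_S1 ->
  jle join p q -> jle join p r ->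
  le (join q r) (phi q (join q r) (psi p q a)) (psi r (join q r) (phi p r a)).
Proof.
  destruct HI as [_ [Hcomm _]].
  intros HS1 Hpq Hpr. destruct (classic (p = q)) as [<- | Hnq].
  { rewrite Hpsi_id, Hpr, Hpsi_id. apply le_refl_at. }
  destruct (classic (p = r)) as [<- | Hnr].
  { rewrite Hphi_id, Hcomm, Hpq, Hphi_id. apply le_refl_at. }
  exact (HS1 p q r (conj Hpq Hnq) (conj Hpr Hnr) a).
Qed.

Lemma cond_S1_psi_le_phi {p q} (a : A p) : cond_S1 ->
  jle join p q -> le q (psi p q a) (phi p q a).
Proof.
  intros HS1 Hpq. pose proof (cond_S1_weak a HS1 Hpq Hpq) as H.
  rewrite (jle_refl HI q), Hphi_id, Hpsi_id in H. exact H.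
Qed.

Lemma sum_le_trans_of_conditions : cond_S1 -> cond_S2 ->
  forall x y z, R x y -> R y z -> R x z.
Proof.
  intros HS1 HS2 [p a] [q b] [r c] Hxy Hyz.
  set (s := join p q). set (u := join q r). set (t := join s u).
  assert (Hst : jle join s t) by apply jle_joinl, HI.
  assert (Hut : jle join u t) by apply jle_joinr, HI.
  assert (Hpt : jle join p t) by exact (jle_trans HI (jle_joinl HI p q) Hst).
  assert (Hrt : jle join r t) by exact (jle_trans HI (jle_joinr HI q r) Hut).
  assert (Hprt : jle join (join p r) t) by exact (jle_join_lub HI Hpt Hrt).
  apply (sum_leE _ _ eq_refl), (cond_S2_reflect _ _ HS2 Hprt).
  rewrite (Hphi_comp _ _ _ (jle_joinl HI p r) Hprt).
  rewrite (Hpsi_comp _ _ _ (jle_joinr HI p r) Hprt).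
  apply le_trans_at with (phi s t (psi q s b)); [exact (sum_le_push_phi Hst Hxy)|].
  apply le_trans_at with (psi u t (phi q u b)); [|exact (sum_le_push_psi Hut Hyz)].
  exact (cond_S1_weak b HS1 (jle_joinr HI p q) (jle_joinl HI q r)).
Qed.

Lemma sum_le_antisym_of_conditions : cond_S1 -> cond_S2 ->
  forall x y, R x y -> R y x -> x = y.
Proof.
  destruct HI as [_ [Hcomm _]].
  intros HS1 HS2 [p a] [q b] Hxy Hyx.
  set (s := join p q).
  pose proof (proj1 (sum_leE _ _ (eq_refl s)) Hxy) as Hab.
  pose proof (proj1 (sum_leE _ _ (Hcomm q p)) Hyx) as Hba.
  assert (Hps : p = s).
  { apply (cond_S2_phi_le_psi_eq a HS2 (jle_joinl HI p q)).
    apply le_trans_at with (psi q s b); [exact Hab|].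
    apply le_trans_at with (phi q s b); [|exact Hba].
    exact (cond_S1_psi_le_phi b HS1 (jle_joinr HI p q)). }
  assert (Hqs : q = s).
  { apply (cond_S2_phi_le_psi_eq b HS2 (jle_joinr HI p q)).
    apply le_trans_at with (psi p s a); [exact Hba|].
    apply le_trans_at with (phi p s a); [|exact Hab].
    exact (cond_S1_psi_le_phi a HS1 (jle_joinl HI p q)). }
  clearbody s. subst s q.
  f_equal. apply (Hle p); apply sum_le_fiber; assumption.
Qed.

End GluedOrder.

Theorem theorem5p1
  (I : Type) (join : I -> I -> I) (HI : is_join_semilattice join)
  (A : I -> Type) (le : forall p, A p -> A p -> Prop)
  (Hle : forall p, is_partial_order (le p))
  (phi psi : forall p q : I, A p -> A q)
  (Hphi_mono : forall p q, jle join p q -> monotone (le p) (le q) (phi p q))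
  (Hpsi_mono : forall p q, jle join p q -> monotone (le p) (le q) (psi p q))
  (Hphi_id : forall p (a : A p), phi p p a = a)
  (Hpsi_id : forall p (a : A p), psi p p a = a)
  (Hphi_comp : forall p q r, jle join p q -> jle join q r ->
     forall a : A p, phi q r (phi p q a) = phi p r a)
  (Hpsi_comp : forall p q r, jle join p q -> jle join q r ->
     forall a : A p, psi q r (psi p q a) = psi p r a) :
  (is_partial_order (sum_le join A le phi psi) /\
   (forall p (a b : A p),
      sum_le join A le phi psi (existT _ p a) (existT _ p b) <-> le p a b))
  <->
  ((* (S1) *)
   (forall p q r, jlt join p q -> jlt join p r ->
      forall a : A p,
        le (join q r) (phi q (join q r) (psi p q a))
                      (psi r (join q r) (phi p r a))) /\
   (* (S2) *)
   (forall p q, jlt join p q ->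
      forall a b : A p, le q (phi p q a) (psi p q b) -> strict (le p) a b)).
Proof.
  split.
  - intros [[_ [Htrans Hanti]] _]. split.
    + eapply cond_S1_of_sum_le_trans; eassumption.
    + eapply cond_S2_of_sum_le_partial_order; eassumption.
  - intros [HS1 HS2]. split; [split; [|split]|].
    + eapply sum_le_refl; eassumption.
    + eapply sum_le_trans_of_conditions; eassumption.
    + eapply sum_le_antisym_of_conditions; eassumption.
    + eapply sum_le_fiber; eassumption.
Qed.
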